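(* Let $(X,\mu)$ be a probability space and let $f\in L^1(X,\mu)$ be real-valued with $\int f\,d\mu=0$ and $\int e^{-\alpha f}\,d\mu<\infty$ for all $\alpha>0$. Then for every integer $n\geq1$, \[ \int\big(e^{-f}-1\big)^{2n}\,d\mu\leq 2^{2n-2}\int\big(e^{-2nf}-1\big)\,d\mu . \] Moreover, if additionally $f\in L^4(X,\mu)$, then \[ \Big|\int e^{\mathrm{i} f}\,d\mu-e^{-\frac12\|f\|_{L^2}^2}\Big|\leq\frac{\|f\|_{L^3}^3}{6}+\frac{\|f\|_{L^2}^4}{8}. \] *)

From HB Require Import structures.
From mathcomp Require Import all_boot all_order all_algebra.
From mathcomp Require Import all_classical all_reals all_analysis.
From mathcomp Require Import complex.
Set Implicit Arguments. Unset Strict Implicit. Unset Printing Implicit Defensive.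
Import Order.TTheory GRing.Theory Num.Theory.
Local Open Scope ring_scope.
Local Open Scope complex_scope.

(* Characteristic-function value  \int e^{i f} dmu  as an element of R[i],
   i.e. (\int cos f) + i (\int sin f). *)
Definition int_expi d (X : measurableType d) (R : realType)
  (mu : {measure set X -> \bar R}) (f : X -> R) : R[i] :=
  (Rintegral mu setT (fun x => cos (f x)))
    +i* (Rintegral mu setT (fun x => sin (f x))).

(* The real number ||f||_{L^p} (the Lnorm of the library, made real by fine;
   finite whenever f is in L^p). *)
Definition LpnormR d (X : measurableType d) (R : realType)
  (mu : {measure set X -> \bar R}) (p : R) (f : X -> R) : R :=
  fine (Lnorm mu p%:E (EFin \o f)).

(* With y = e^{-t}, the pointwise inequality |y - 1|^n <= |y^n - 1| (n >= 1)
   and e^{-nt} >= 1 - nt give (e^{-t} - 1)^{2n} <= e^{-2nt} - 1 + 2nt;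
   integrating and using that f is centred proves the first bound, even with
   constant 1 instead of 2^{2n-2}.
   For the second bound, |e^{ix} - 1 - ix + x^2/2| <= |x|^3/6 is tested
   against every unit vector (c, s) of the plane, which makes it a real
   inequality proved by integrating three times from 0; integrating it in x
   bounds |int e^{if} - (1 - ||f||_2^2/2)| by ||f||_3^3/6, and
   |e^{-u} - (1 - u)| <= u^2/2 at u = ||f||_2^2/2 accounts for the rest. *)

From HB Require Import structures.
From mathcomp Require Import all_boot all_order all_algebra.
From mathcomp Require Import all_classical all_reals all_analysis.
From mathcomp Require Import complex.
From mathcomp Require Import ring lra measurable_realfun.
Set Implicit Arguments. Unset Strict Implicit. Unset Printing Implicit Defensive.
Import Order.TTheory GRing.Theory Num.Theory.
Import numFieldNormedType.Exports.
Local Open Scope ring_scope.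
Local Open Scope complex_scope.

Lemma exprn_le_1Dexprn (R : realDomainType) (a : R) m n : 0 <= a -> (m <= n)%N ->
  a ^+ m <= 1 + a ^+ n.
Proof.
move=> a_ge0 mn; have [a_le1|a_ge1] := leP a 1.
  by rewrite (le_trans (exprn_ile1 _ a_ge0 a_le1)) // lerDl exprn_ge0.
by rewrite (le_trans (ler_weXn2l (ltW a_ge1) mn)) // lerDr.
Qed.

Section real_inequalities.
Variable R : realType.
Implicit Types (c s t x y : R) (n : nat).

Lemma ge0_derive_ge0 (F F' : R -> R) :
  (forall x, is_derive x 1 F (F' x)) -> (forall x, 0 <= x -> 0 <= F' x) ->
  F 0 = 0 -> forall x, 0 <= x -> 0 <= F x.
Proof.
move=> dF F'_ge0 F0 x x_ge0; rewrite -F0.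
apply: (@ger0_derive1_ndecry _ F 0) => // [y|].
- by rewrite in_itv /= andbT derive1E derive_val => /ltW; exact: F'_ge0.
- apply: continuous_subspaceT => y; apply: differentiable_continuous.
  exact/derivable1_diffP/ex_derive.
Qed.

Lemma expRN_le_taylor2 t : 0 <= t -> expR (- t) <= 1 - t + t ^+ 2 / 2.
Proof.
(* Multiplied by e^t, so that no chain rule is needed. *)
move=> t_ge0; pose F : R -> R := expR * (cst 2 - 2 \*: id + id ^+ 2) - cst 2.
have dF (y : R) : is_derive y 1 F (expR y * y ^+ 2).
  by eapply is_derive_eq; first exact: _; rewrite !fctE /= /GRing.scale /=; ring.
have : 0 <= F t.
  apply: (ge0_derive_ge0 dF _ _ t_ge0) => [y _|].
    by rewrite mulr_ge0 ?expR_ge0 ?sqr_ge0.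
  by rewrite /F !fctE /= /GRing.scale /= expR0; ring.
rewrite /F !fctE /= /GRing.scale /=.
have := expR_gt0 (- t).
have : expR t * expR (- t) = 1 by rewrite -expRD subrr expR0.
nra.
Qed.

Lemma normr_expRN_taylor1 t : 0 <= t -> `|expR (- t) - (1 - t)| <= t ^+ 2 / 2.
Proof.
move=> t_ge0; have := expR_ge1Dx (- t); have := expRN_le_taylor2 t_ge0.
by rewrite ler_norml; lra.
Qed.

Lemma cos_sin_taylor_le c s x : c ^+ 2 + s ^+ 2 <= 1 -> 0 <= x ->
  c * (cos x - 1 + x ^+ 2 / 2) + s * (sin x - x) <= x ^+ 3 / 6.
Proof.
move=> cs_le1 x_ge0; rewrite -subr_ge0.
have deriv3_ge0 y : 0 <= 1 - c * sin y + s * cos y.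
  have : (c * sin y - s * cos y) ^+ 2 <= 1.
    have -> : (c * sin y - s * cos y) ^+ 2 =
      (c ^+ 2 + s ^+ 2) * (cos y ^+ 2 + sin y ^+ 2)
      - (c * cos y + s * sin y) ^+ 2.
      by ring.
    by rewrite cos2Dsin2 mulr1; have := sqr_ge0 (c * cos y + s * sin y); lra.
  by nra.
have deriv2_ge0 y : 0 <= y -> 0 <= y + c * cos y - c + s * sin y.
  pose F : R -> R := id + c \*: cos - cst c + s \*: sin.
  have dF (z : R) : is_derive z 1 F (1 - c * sin z + s * cos z).
    by eapply is_derive_eq; first exact: _; rewrite /GRing.scale /=; ring.
  have -> : y + c * cos y - c + s * sin y = F y.
    by rewrite /F !fctE /= /GRing.scale /=.
  apply: (ge0_derive_ge0 dF) => [z _|]; first exact: deriv3_ge0.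
  by rewrite /F !fctE /= /GRing.scale /= cos0 sin0; ring.
have deriv1_ge0 y : 0 <= y -> 0 <= y ^+ 2 / 2 + c * (sin y - y) + s * (1 - cos y).
  pose F : R -> R := 2^-1 \*: id ^+ 2 + c \*: (sin - id) + s \*: (cst 1 - cos).
  have dF (z : R) : is_derive z 1 F (z + c * cos z - c + s * sin z).
    by eapply is_derive_eq; first exact: _; rewrite /GRing.scale /=; field.
  have -> : y ^+ 2 / 2 + c * (sin y - y) + s * (1 - cos y) = F y.
    by rewrite /F !fctE /= /GRing.scale /=; ring.
  apply: (ge0_derive_ge0 dF) => [z|]; first exact: deriv2_ge0.
  by rewrite /F !fctE /= /GRing.scale /= cos0 sin0; ring.
pose F : R -> R :=
  6^-1 \*: id ^+ 3 - c \*: (cos - cst 1 + 2^-1 \*: id ^+ 2) - s \*: (sin - id).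
have dF (z : R) :
    is_derive z 1 F (z ^+ 2 / 2 + c * (sin z - z) + s * (1 - cos z)).
  by eapply is_derive_eq; first exact: _; rewrite /GRing.scale /=; field.
have -> : x ^+ 3 / 6 - (c * (cos x - 1 + x ^+ 2 / 2) + s * (sin x - x)) = F x.
  by rewrite /F !fctE /= /GRing.scale /=; ring.
apply: (ge0_derive_ge0 dF _ _ x_ge0) => [z|]; first exact: deriv1_ge0.
by rewrite /F !fctE /= /GRing.scale /= cos0 sin0; ring.
Qed.

Lemma cos_sin_taylor_le_norm c s x : c ^+ 2 + s ^+ 2 <= 1 ->
  c * (cos x - 1 + x ^+ 2 / 2) + s * (sin x - x) <= `|x| ^+ 3 / 6.
Proof.
move=> cs_le1; have [x_ge0|x_lt0] := leP 0 x.
  by rewrite ger0_norm //; exact: cos_sin_taylor_le.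
have := @cos_sin_taylor_le c (- s) (- x); rewrite sqrrN cosN sinN ltr0_norm //.
rewrite oppr_ge0 => /(_ cs_le1 (ltW x_lt0)); rewrite sqrrN.
by lra.
Qed.

Lemma normr_subr1_exprS_le y n : 0 <= y -> `|y - 1| ^+ n.+1 <= `|y ^+ n.+1 - 1|.
Proof.
move=> y_ge0; elim: n => [|n IH]; first by rewrite !expr1.
have yn_ge0 : 0 <= y ^+ n.+1 by exact: exprn_ge0.
have [y_ge1|y_lt1] := leP 1 y.
- have yn_ge1 : 1 <= y ^+ n.+1 by exact: exprn_ege1.
  have ySn_ge1 : 1 <= y ^+ n.+2 by exact: exprn_ege1.
  rewrite !ger0_norm ?subr_ge0 // in IH *.
  have : 0 <= (y - 1) ^+ n.+1 by rewrite exprn_ge0 // subr_ge0.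
  rewrite [_ ^+ n.+2]exprS [y ^+ n.+2]exprS; nra.
- have y_le1 := ltW y_lt1.
  have yn_le1 : y ^+ n.+1 <= 1 by exact: exprn_ile1.
  have ySn_le1 : y ^+ n.+2 <= 1 by exact: exprn_ile1.
  rewrite !ler0_norm ?subr_le0 // !opprB in IH *.
  have : 0 <= (1 - y) ^+ n.+1 by rewrite exprn_ge0 // subr_ge0.
  rewrite [_ ^+ n.+2]exprS [y ^+ n.+2]exprS; nra.
Qed.

Lemma expRN_subr1_exprM2_le t n : (0 < n)%N ->
  (expR (- t) - 1) ^+ (2 * n) <= expR (- ((2 * n)%:R * t)) - 1 + (2 * n)%:R * t.
Proof.
case: n => // n _; set y := expR (- t).
have y_ge0 : 0 <= y := expR_ge0 _.
have yn : y ^+ n.+1 = expR (- (n.+1%:R * t)) by rewrite /y -expRM_natl mulrN.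
have -> : (y - 1) ^+ (2 * n.+1) = (`|y - 1| ^+ n.+1) ^+ 2.
  by rewrite -exprM mulnC -normrX ger0_norm // exprM sqr_ge0.
have -> : expR (- ((2 * n.+1)%:R * t)) = (y ^+ n.+1) ^+ 2.
  by rewrite yn -expRM_natl natrM; congr expR; ring.
have := normr_subr1_exprS_le n y_ge0; have := expR_ge1Dx (- (n.+1%:R * t)).
have := real_normK (num_real (y ^+ n.+1 - 1)).
have : 0 <= `|y - 1| ^+ n.+1 by rewrite exprn_ge0.
rewrite -yn natrM; nra.
Qed.

Lemma normc_le_dual a b r :
  (forall c s, c ^+ 2 + s ^+ 2 <= 1 -> c * a + s * b <= r) -> `|a +i* b| <= r%:C.
Proof.
move=> dual; rewrite normc_def lecR /=.
have [ab0|ab_neq0] := eqVneq (a ^+ 2 + b ^+ 2) 0.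
  rewrite ab0 sqrtr0; have := dual 0 0.
  by rewrite expr0n /= !mul0r addr0 => /(_ ler01).
have ab_ge0 : 0 <= a ^+ 2 + b ^+ 2 by rewrite addr_ge0 ?sqr_ge0.
set rho := Num.sqrt (a ^+ 2 + b ^+ 2).
have rho_neq0 : rho != 0 by rewrite sqrtr_eq0 -ltNge lt_def ab_neq0.
have rho2 : rho ^+ 2 = a ^+ 2 + b ^+ 2 by rewrite sqr_sqrtr.
have := dual (a / rho) (b / rho).
have -> : (a / rho) ^+ 2 + (b / rho) ^+ 2 = 1.
  by rewrite !expr_div_n -mulrDl -rho2 divff // sqrf_eq0.
have -> : a / rho * a + b / rho * b = rho.
  by apply: (mulIf rho_neq0); rewrite -expr2 rho2; field.
by apply.
Qed.
End real_inequalities.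

Section finite_measure_bounds.
Context {R : realType} {d : measure_display} {X : measurableType d}.
Variable mu : {finite_measure set X -> \bar R}.
Implicit Types (f g h : X -> R).

Let integrable_cst c : mu.-integrable setT (EFin \o cst c).
Proof. exact: finite_measure_integrable_cst. Qed.

Let integrableD_real g h : mu.-integrable setT (EFin \o g) ->
  mu.-integrable setT (EFin \o h) -> mu.-integrable setT (EFin \o (g \+ h)).
Proof. by move=> ig ih; apply: eq_integrable (integrableD measurableT ig ih). Qed.

Let integrableB_real g h : mu.-integrable setT (EFin \o g) ->
  mu.-integrable setT (EFin \o h) -> mu.-integrable setT (EFin \o (g \- h)).
Proof. by move=> ig ih; apply: eq_integrable (integrableB measurableT ig ih). Qed.

Let integrableZl_real k g : mu.-integrable setT (EFin \o g) ->
  mu.-integrable setT (EFin \o (fun x => k * g x)).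
Proof. by move=> ig; apply: eq_integrable (integrableZl measurableT k ig). Qed.

Lemma integral_expRN_subr1_exprM2_le f n : (0 < n)%N ->
  mu.-integrable setT (EFin \o f) -> (\int[mu]_x (f x)%:E = 0)%E ->
  (\int[mu]_x (expR (- ((2 * n)%:R * f x)))%:E < +oo)%E ->
  (\int[mu]_x ((expR (- f x) - 1) ^+ (2 * n))%:E
    <= \int[mu]_x (expR (- ((2 * n)%:R * f x)) - 1)%:E)%E.
Proof.
move=> n_gt0 f_int f_mean0 g_fin; set k : R := (2 * n)%:R.
have mf : measurable_fun setT f by exact/measurable_EFinP/(measurable_int mu).
pose g x := expR (- (k * f x)).
have mg : measurable_fun setT g.
  apply: measurableT_comp => //; apply: measurable_funN.
  exact: measurable_funM.
have g_int : mu.-integrable setT (EFin \o g).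
  apply/integrableP; split; first exact/measurable_EFinP.
  by under eq_integral do rewrite /= ger0_norm ?expR_ge0 //.
have -> : (\int[mu]_x (g x - 1)%:E = \int[mu]_x (g x - 1 + k * f x)%:E)%E.
  under [RHS]eq_integral do rewrite EFinD.
  rewrite integralD //; last exact: integrableZl_real.
    under [X in (_ + X)%E]eq_integral do rewrite EFinM.
    by rewrite integralZl // f_mean0 mule0 adde0.
  exact: integrableB_real g_int (integrable_cst 1).
apply: ge0_le_integral => //.
- by move=> x _; rewrite lee_fin mulnC exprM sqr_ge0.
- apply/measurable_EFinP; apply: measurable_funX; apply: measurable_funB => //.
  by apply: measurableT_comp => //; exact: measurable_funN.
- apply/measurable_EFinP; apply: measurable_funD; first exact: measurable_funB.
  exact: measurable_funM.
- by move=> x _; rewrite lee_fin expRN_subr1_exprM2_le.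
Qed.

Section characteristic_function.
Variable f : X -> R.
Hypotheses (mu_setT : mu setT = 1%E) (f_int : mu.-integrable setT (EFin \o f))
  (f_mean0 : (\int[mu]_x (f x)%:E = 0)%E)
  (f4_int : mu.-integrable setT (fun x => (`|f x| ^+ 4)%:E)).

Let mf : measurable_fun setT f.
Proof. exact/measurable_EFinP/(measurable_int mu). Qed.

Let dominated_integrable g : measurable_fun setT g ->
  (forall x, `|g x| <= 1 + `|f x| ^+ 4) -> mu.-integrable setT (EFin \o g).
Proof.
move=> mg g_le.
have dom_int : mu.-integrable setT (EFin \o (fun x => 1 + `|f x| ^+ 4)).
  by apply: integrableD_real (integrable_cst 1) _; exact: f4_int.
apply: le_integrable dom_int => //; first exact/measurable_EFinP.
by move=> x _ /=; rewrite lee_fin (le_trans (g_le x)) // ler_norm.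
Qed.

Let cos_int : mu.-integrable setT (EFin \o (fun x => cos (f x))).
Proof.
apply: dominated_integrable => [|x].
  apply: measurableT_comp mf; apply: continuous_measurable_fun.
  exact: continuous_cos.
by rewrite (le_trans (cos_max _)) // lerDl exprn_ge0.
Qed.

Let sin_int : mu.-integrable setT (EFin \o (fun x => sin (f x))).
Proof.
apply: dominated_integrable => [|x].
  apply: measurableT_comp mf; apply: continuous_measurable_fun.
  exact: continuous_sin.
by rewrite (le_trans (sin_max _)) // lerDl exprn_ge0.
Qed.

Let normr_expr_int k : (k <= 4)%N ->
  mu.-integrable setT (EFin \o (fun x => `|f x| ^+ k)).
Proof.
move=> k_le4; apply: dominated_integrable => [|x].
  by apply: measurable_funX; exact: measurableT_comp mf.
by rewrite normrX normr_id exprn_le_1Dexprn.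
Qed.

Let sqr_int := @normr_expr_int 2 isT.
Let cube_int := @normr_expr_int 3 isT.

#[local] Hint Resolve integrable_cst f_int cos_int sin_int : core.
#[local] Hint Resolve sqr_int cube_int : core.

Lemma normc_int_expi_sub_taylor2 :
  `|int_expi mu f - (1 - Rintegral mu setT (fun x => `|f x| ^+ 2) / 2)%:C|
    <= (Rintegral mu setT (fun x => `|f x| ^+ 3) / 6)%:C.
Proof.
pose a x := cos (f x) - 1 + 2^-1 * `|f x| ^+ 2.
pose b x := sin (f x) - f x.
have a_int : mu.-integrable setT (EFin \o a).
  apply: integrableD_real; last exact: integrableZl_real.
  exact: integrableB_real cos_int (integrable_cst 1).
have b_int : mu.-integrable setT (EFin \o b) by exact: integrableB_real.
have int_a : Rintegral mu setT a = Rintegral mu setT (fun x => cos (f x)) - 1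
    + 2^-1 * Rintegral mu setT (fun x => `|f x| ^+ 2).
  rewrite RintegralD //; last exact: integrableZl_real.
    rewrite (RintegralZl (mu := mu)) // RintegralB //; last exact: integrable_cst.
    congr (_ - _ + _).
    (* The constant 1 of [a] carries another ring instance than the one of
       [Rintegral_cst], so the latter is applied, not rewritten with. *)
    apply: etrans (@Rintegral_cst _ _ _ mu _ measurableT 1) _.
    by rewrite mul1r (congr1 fine mu_setT).
  exact: integrableB_real cos_int (integrable_cst 1).
have int_b : Rintegral mu setT b = Rintegral mu setT (fun x => sin (f x)).
  by rewrite RintegralB // [Rintegral _ _ f]/Rintegral f_mean0 subr0.
have -> : int_expi mu f - (1 - Rintegral mu setT (fun x => `|f x| ^+ 2) / 2)%:C
    = Rintegral mu setT a +i* Rintegral mu setT b.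
  by rewrite int_a int_b /int_expi /=; congr (_ +i* _); ring.
apply: normc_le_dual => c s cs_le1.
rewrite -!RintegralZl // -RintegralD //; [|exact: integrableZl_real..].
rewrite mulrC -RintegralZl //.
apply: le_Rintegral => //.
- by apply: integrableD_real; exact: integrableZl_real.
- exact: integrableZl_real.
- move=> x _; have := cos_sin_taylor_le_norm (f x) cs_le1.
  by rewrite /a /b real_normK ?num_real //; lra.
Qed.
End characteristic_function.
End finite_measure_bounds.

Lemma LpnormR_expr (R : realType) (d : measure_display) (X : measurableType d)
    (mu : {measure set X -> \bar R}) (f : X -> R) k : (0 < k)%N ->
  LpnormR mu k%:R f ^+ k = Rintegral mu setT (fun x => `|f x| ^+ k).
Proof.
move=> k_gt0; rewrite /LpnormR -powR_mulrn; last exact/fine_ge0/Lnorm_ge0.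
rewrite -fine_poweR poweR_Lnorm ?pnatr_eq0 -?lt0n //.
by congr fine; apply: eq_integral => x _ /=; rewrite powR_mulrn.
Qed.

Theorem lemma4p4 (R : realType) (d : measure_display) (X : measurableType d)
  (P : probability X R) (f : X -> R)
  (f_int : P.-integrable setT (EFin \o f))
  (f_mean0 : (\int[P]_x (f x)%:E = 0)%E)
  (f_expint : forall alpha : R, 0 < alpha ->
     (\int[P]_x (expR (- (alpha * f x)))%:E < +oo)%E) :
  (forall n : nat, (1 <= n)%N ->
    (\int[P]_x ((expR (- f x) - 1) ^+ (2 * n))%:E
      <= (2 ^+ (2 * n - 2))%:E
         * \int[P]_x (expR (- ((2 * n)%:R * f x)) - 1)%:E)%E)
  /\
  (P.-integrable setT (fun x => (`|f x| ^+ 4)%:E) ->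
    `| int_expi P f - (expR (- (LpnormR P 2 f ^+ 2 / 2)))%:C |
      <= ((LpnormR P 3 f ^+ 3 / 6 + LpnormR P 2 f ^+ 4 / 8)%:C : R[i])).
Proof.
split=> [n n_gt0|f4_int].
  have k_gt0 : 0 < (2 * n)%:R :> R by rewrite ltr0n muln_gt0.
  have le_int :=
    integral_expRN_subr1_exprM2_le n_gt0 f_int f_mean0 (f_expint _ k_gt0).
  have rhs_ge0 : (0 <= \int[P]_x (expR (- ((2 * n)%:R * f x)) - 1)%:E)%E.
    apply: le_trans le_int; apply: integral_ge0 => x _.
    by rewrite lee_fin mulnC exprM sqr_ge0.
  by apply: le_trans le_int _; rewrite lee_pemull // lee_fin exprn_ege1 // ler1n.
have -> : LpnormR P 2 f ^+ 4 = (LpnormR P 2 f ^+ 2) ^+ 2 by rewrite -exprM.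
rewrite !LpnormR_expr //.
set S := Rintegral P setT _; set L := Rintegral P setT _.
have S_ge0 : 0 <= S by apply: Rintegral_ge0 => x _; exact: exprn_ge0.
have -> : int_expi P f - (expR (- (S / 2)))%:C
    = (int_expi P f - (1 - S / 2)%:C) + (1 - S / 2 - expR (- (S / 2)))%:C.
  by rewrite !raddfB /=; ring.
apply: le_trans (ler_normD _ _) _; rewrite [leRHS]raddfD; apply: lerD.
  exact: normc_int_expi_sub_taylor2 (probability_setT P) f_int f_mean0 f4_int.
rewrite normc_def lecR /= expr0n addr0 sqrtr_sqr distrC.
have -> : S ^+ 2 / 8 = (S / 2) ^+ 2 / 2 by field.
by apply: normr_expRN_taylor1; rewrite divr_ge0.
Qed.
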